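(* Let $M$ be a nearly finitary matroid on ground set $E$ that is not $n$-nearly finitary for any $n\in\mathbb{N}$, and let $T$ be a set of coloops of $M$. Then the contraction $M/T$ is a nearly finitary matroid that is not $n$-nearly finitary for any $n\in\mathbb{N}$.
   Context: Matroids (possibly infinite): $\emptyset$ independent; subsets of independent sets independent; if $B$ is maximal independent and $A$ non-maximal independent, then $A\cup\{b\}$ is independent for some $b\in B\setminus A$; for independent $A\subseteq X\subseteq E$ there is a maximal independent $S$ with $A\subseteq S\subseteq X$. Bases are maximal independent sets. The dual $M^*$ has as independent sets the subsets of complements of bases of $M$. For $X\subseteq E$, $M|X$ is the restriction (independent sets of $M$ contained in $X$), and the contraction $M/T$ is $(M^*|(E\setminus T))^*$. A coloop of $M$ is an element contained in every base of $M$ (equivalently, in no circuit). The finitarization $M^{\mathrm{fin}}$ has as independent sets those sets all of whose finite subsets are independent in $M$. $M$ is nearly finitary if $F\setminus B$ is finite whenever a base $F$ of $M^{\mathrm{fin}}$ contains a base $B$ of $M$; $n$-nearly finitary if $|F\setminus B|\le n$ for all such pairs. *)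

From Stdlib Require Import List.
Set Implicit Arguments.

Definition subset {E : Type} (A B : E -> Prop) : Prop := forall x, A x -> B x.

Definition finite {E : Type} (A : E -> Prop) : Prop :=
  exists l : list E, forall x, A x -> In x l.

Definition card_le {E : Type} (A : E -> Prop) (n : nat) : Prop :=
  exists l : list E, length l <= n /\ forall x, A x -> In x l.

Record setsys (E : Type) := SetSys {
  ground : E -> Prop;
  indep : (E -> Prop) -> Prop }.

Definition is_base {E : Type} (M : setsys E) (B : E -> Prop) : Prop :=
  indep M B /\ forall A, indep M A -> subset B A -> subset A B.

(* Matroid axioms (I1), (I2), (I3), (IM); independent sets lie in the ground set. *)
Definition is_matroid {E : Type} (M : setsys E) : Prop :=
  (forall A, indep M A -> subset A (ground M)) /\
  indep M (fun _ => False) /\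
  (forall A B, indep M A -> subset B A -> indep M B) /\
  (forall A B, indep M A -> ~ is_base M A -> is_base M B ->
     exists b, B b /\ ~ A b /\ indep M (fun x => A x \/ x = b)) /\
  (forall A X, indep M A -> subset A X -> subset X (ground M) ->
     exists S, subset A S /\ subset S X /\ indep M S /\
       forall S', indep M S' -> subset S S' -> subset S' X -> subset S' S).

Definition dual {E : Type} (M : setsys E) : setsys E :=
  SetSys (ground M)
    (fun A => subset A (ground M) /\
       exists B, is_base M B /\ forall x, A x -> ~ B x).

Definition restrict {E : Type} (M : setsys E) (X : E -> Prop) : setsys E :=
  SetSys (fun x => ground M x /\ X x) (fun A => indep M A /\ subset A X).

Definition contract {E : Type} (M : setsys E) (T : E -> Prop) : setsys E :=
  dual (restrict (dual M) (fun x => ground M x /\ ~ T x)).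

Definition is_coloop {E : Type} (M : setsys E) (e : E) : Prop :=
  ground M e /\ forall B, is_base M B -> B e.

Definition finitarization {E : Type} (M : setsys E) : setsys E :=
  SetSys (ground M)
    (fun A => subset A (ground M) /\
       forall F, finite F -> subset F A -> indep M F).

Definition nearly_finitary {E : Type} (M : setsys E) : Prop :=
  forall F B, is_base (finitarization M) F -> is_base M B -> subset B F ->
    finite (fun x => F x /\ ~ B x).

Definition n_nearly_finitary {E : Type} (n : nat) (M : setsys E) : Prop :=
  forall F B, is_base (finitarization M) F -> is_base M B -> subset B F ->
    card_le (fun x => F x /\ ~ B x) n.

(* Every element of T lies in every base of M, and then also in every base of
   the finitarization of M.  Hence the independent sets of M/T are exactly the
   M-independent sets avoiding T, and B |-> B \/ T, B |-> B \ T identify the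
   bases of M/T with those of M, and the bases of (M/T)^fin with those of M^fin.
   These identifications leave the differences F \ B unchanged, so M/T is
   (n-)nearly finitary exactly when M is. *)
From Stdlib Require Import Classical.
Set Implicit Arguments.

Lemma finite_subset E (X Y : E -> Prop) : subset X Y -> finite Y -> finite X.
Proof. intros HXY [l Hl]. exists l. auto. Qed.

Lemma card_le_subset E (X Y : E -> Prop) n : subset X Y -> card_le Y n -> card_le X n.
Proof. intros HXY [l [Hlen Hl]]. exists l. auto. Qed.

Lemma matroid_indep_subset E (M : setsys E) :
  is_matroid M -> forall A B, indep M A -> subset B A -> indep M B.
Proof. intros (_ & _ & Hsub & _). exact Hsub. Qed.

Lemma finitarization_indep_subset E (M : setsys E) :
  forall A B, indep (finitarization M) A -> subset B A -> indep (finitarization M) B.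
Proof.
  intros A B [HAg HAfin] HBA. split.
  - intros x Hx. exact (HAg x (HBA x Hx)).
  - intros F HF HFB. apply HAfin; [exact HF|]. intros x Hx. exact (HBA x (HFB x Hx)).
Qed.

Lemma base_extend E (M : setsys E) {A : E -> Prop} :
  is_matroid M -> indep M A -> exists B, is_base M B /\ subset A B.
Proof.
  intros (Hground & _ & _ & _ & Hmax) HA.
  destruct (Hmax A (ground M) HA (Hground A HA) (fun x h => h))
    as (S & HAS & _ & HS & HSmax).
  exists S. repeat split; auto.
Qed.

Lemma is_base_restrict E (M : setsys E) X B :
  is_base M B -> subset B X -> is_base (restrict M X) B.
Proof.
  intros [HB HBmax] HBX. split; [split; auto|].
  intros A [HA _]. apply HBmax, HA.
Qed.

Lemma is_base_dual_compl E (M : setsys E) B :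
  (forall A, indep M A -> subset A (ground M)) -> is_base M B ->
  is_base (dual M) (fun x => ground M x /\ ~ B x).
Proof.
  intros Hground HB. split.
  - split; [intros x Hx; apply Hx|]. exists B. split; auto. intros x Hx; apply Hx.
  - intros A [HAg (B2 & HB2 & HAB2)] HsA.
    assert (HB2B : subset B2 B).
    { intros y Hy. apply NNPP. intros HnB.
      apply (HAB2 y); auto. apply HsA. split; auto.
      apply (Hground B2); auto. apply HB2. }
    assert (HBB2 : subset B B2) by (apply HB2; [apply HB | exact HB2B]).
    intros x Hx. split; auto. intros HBx. exact (HAB2 x Hx (HBB2 x HBx)).
Qed.

Lemma indep_contract E (M : setsys E) T A :
  (forall A B, indep M A -> subset B A -> indep M B) ->
  indep (contract M T) A -> indep M A /\ (forall x, A x -> ~ T x).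
Proof.
  intros Hsub [HAg (D & [[[HDg (B & HB & HDB)] HDX] HDmax] & HAD)].
  split; [|intros x Hx; apply (HAg x Hx)].
  apply (Hsub B); [apply HB|].
  intros x Hx. apply NNPP. intros HnB.
  (* otherwise x could be added to the base D of the restricted dual *)
  apply (HAD x Hx), (HDmax (fun y => D y \/ y = x)); [| intros y; auto | auto].
  destruct (HAg x Hx) as [Hgx HXx].
  split; [split|].
  - intros y [Hy|<-]; auto.
  - exists B. split; auto. intros y [Hy|<-]; auto.
  - intros y [Hy|<-]; auto.
Qed.

Section Avoiding.

Context {E : Type} {M N : setsys E} {T : E -> Prop}.
Hypothesis indep_N : forall A, indep N A <-> indep M A /\ (forall x, A x -> ~ T x).
Hypothesis indep_sub : forall {A B}, indep M A -> subset B A -> indep M B.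
Hypothesis indep_setU : forall {A}, indep M A -> indep M (fun x => A x \/ T x).

Lemma indep_setD {A} : indep M A -> indep N (fun x => A x /\ ~ T x).
Proof.
  intros HA. apply indep_N. split; [|intros x [_ Hx]; exact Hx].
  apply (indep_sub HA). intros x [Hx _]; exact Hx.
Qed.

Lemma is_base_of_setU {A} : indep N A -> is_base M (fun x => A x \/ T x) -> is_base N A.
Proof.
  intros HA [_ HATmax]. split; auto.
  intros A' HA' HAA'. pose proof (proj1 (indep_N A') HA') as [HA'i HA'T].
  assert (Hs : subset (fun x => A x \/ T x) (fun x => A' x \/ T x))
    by (intros x [Hx|Hx]; auto).
  intros x Hx. destruct (HATmax _ (indep_setU HA'i) Hs x (or_introl Hx)) as [HAx|HTx].
  - exact HAx.
  - exfalso. exact (HA'T x Hx HTx).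
Qed.

Lemma base_setU {B} : is_base N B -> is_base M (fun x => B x \/ T x).
Proof.
  intros [HB HBmax]. pose proof (proj1 (indep_N B) HB) as [HBi HBT].
  split; [apply indep_setU; auto|].
  intros A HA HBA x Hx.
  destruct (classic (T x)) as [Ht|Hnt]; auto. left.
  apply (HBmax _ (indep_setD HA)); [|split; auto].
  intros y Hy. split; auto.
Qed.

Lemma base_setD {B} : is_base M B -> is_base N (fun x => B x /\ ~ T x).
Proof.
  intros [HB HBmax]. split; [apply indep_setD; auto|].
  intros A HA HBA. pose proof (proj1 (indep_N A) HA) as [HAi HAT].
  assert (HBAT : subset B (fun x => A x \/ T x)).
  { intros x Hx. destruct (classic (T x)); auto. }
  intros x Hx. split; auto. exact (HBmax _ (indep_setU HAi) HBAT x (or_introl Hx)).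
Qed.

Lemma is_matroid_avoiding :
  is_matroid M -> (forall x, ground N x <-> ground M x /\ ~ T x) -> is_matroid N.
Proof.
  intros (Hground & Hempty & _ & Hexch & Hmax) HgN.
  split; [|split; [|split; [|split]]].
  - intros A HA x Hx. apply indep_N in HA as [HA HAT].
    apply HgN. split; [apply (Hground A)|apply HAT]; auto.
  - apply indep_N. auto.
  - intros A B HA HBA. apply indep_N in HA as [HA HAT].
    apply indep_N. split; [apply (indep_sub HA)|]; auto.
  - intros A B HA HnA HB. pose proof (proj1 (indep_N A) HA) as [HAi HAT].
    assert (HnAT : ~ is_base M (fun x => A x \/ T x))
      by (intros HAT'; apply HnA, is_base_of_setU; auto).
    destruct (Hexch _ _ (indep_setU HAi) HnAT (base_setU HB)) as (b & Hb & Hnb & Hi).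
    exists b. split; [tauto|split; [tauto|]].
    apply indep_N. split.
    + apply (indep_sub Hi). intros x [Hx|Hx]; auto.
    + intros x [Hx|<-]; auto.
  - intros A X HA HAX HXg. apply indep_N in HA as [HAi HAT].
    assert (HXM : forall x, X x -> ground M x /\ ~ T x) by (intros x Hx; apply HgN; auto).
    destruct (Hmax A X HAi HAX (fun x Hx => proj1 (HXM x Hx)))
      as (S & HAS & HSX & HS & HSmax).
    exists S. repeat split; auto.
    + apply indep_N. split; auto. intros x Hx. apply (HXM x (HSX x Hx)).
    + intros S' HS'. apply indep_N in HS'. apply HSmax; tauto.
Qed.

End Avoiding.

Section Coloops.

Context {E : Type} {M : setsys E} {T : E -> Prop}.
Hypothesis HM : is_matroid M.
Hypothesis HT : forall t, T t -> is_coloop M t.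

Lemma coloops_sub_base {B} : is_base M B -> subset T B.
Proof. intros HB t Ht. exact (proj2 (HT Ht) B HB). Qed.

Lemma indep_setU_coloops {A} : indep M A -> indep M (fun x => A x \/ T x).
Proof.
  intros HA. destruct (base_extend HM HA) as (B & HB & HAB).
  apply (matroid_indep_subset HM (proj1 HB)).
  intros x [Hx|Hx]; [exact (HAB x Hx) | exact (coloops_sub_base HB Hx)].
Qed.

Lemma indep_finitarization_setU_coloops {A} :
  indep (finitarization M) A -> indep (finitarization M) (fun x => A x \/ T x).
Proof.
  intros [HAg HAfin]. split.
  - intros x [Hx|Hx]; auto. exact (proj1 (HT Hx)).
  - intros G [l Hl] HGA.
    assert (HGA_indep : indep M (fun x => G x /\ A x)).
    { apply HAfin; [exists l; intros x [Hx _]; auto | intros x [_ Hx]; auto]. }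
    apply (matroid_indep_subset HM (indep_setU_coloops HGA_indep)).
    intros x Hx. destruct (HGA x Hx); auto.
Qed.

Lemma contract_coloops_indep A :
  indep (contract M T) A <-> indep M A /\ (forall x, A x -> ~ T x).
Proof.
  pose proof HM as (Hground & _).
  split; [apply indep_contract, matroid_indep_subset, HM|].
  intros [HA HAT]. destruct (base_extend HM HA) as (B & HB & HAB).
  split.
  - intros x Hx. simpl. pose proof (Hground A HA x Hx). specialize (HAT x Hx). tauto.
  - exists (fun x => ground M x /\ ~ B x). split.
    + apply is_base_restrict; [apply is_base_dual_compl; auto|].
      intros x [Hgx HnB]. split; auto. intros Ht. apply HnB, (coloops_sub_base HB), Ht.
    + intros x Hx [_ HnB]. apply HnB, HAB, Hx.
Qed.

Lemma finitarization_contract_coloops_indep A :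
  indep (finitarization (contract M T)) A <->
  indep (finitarization M) A /\ (forall x, A x -> ~ T x).
Proof.
  simpl. split.
  - intros [HAg HAfin]. split; [split|].
    + intros x Hx. apply HAg in Hx. tauto.
    + intros F HF HFA. apply contract_coloops_indep, HAfin; auto.
    + intros x Hx. apply HAg in Hx. tauto.
  - intros [[HAg HAfin] HAT]. split.
    + intros x Hx. simpl. auto.
    + intros F HF HFA. apply contract_coloops_indep. auto.
Qed.

Lemma is_matroid_contract_coloops : is_matroid (contract M T).
Proof.
  apply (is_matroid_avoiding contract_coloops_indep
           (matroid_indep_subset HM) (@indep_setU_coloops) HM).
  intros x. simpl. tauto.
Qed.

Lemma nearly_finitary_contract_coloops :
  nearly_finitary M -> nearly_finitary (contract M T).
Proof.
  intros Hnf F B HF HB HBF.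
  apply finite_subset with (Y := fun x => (F x \/ T x) /\ ~ (B x \/ T x)).
  - intros x [HFx HnB]. split; [left; exact HFx|]. intros [HBx|HTx]; [exact (HnB HBx)|].
    exact (proj2 (proj1 (finitarization_contract_coloops_indep F) (proj1 HF)) x HFx HTx).
  - apply Hnf.
    + exact (base_setU finitarization_contract_coloops_indep
               (@finitarization_indep_subset E M)
               (@indep_finitarization_setU_coloops) HF).
    + exact (base_setU contract_coloops_indep (matroid_indep_subset HM)
               (@indep_setU_coloops) HB).
    + intros x [Hx|Hx]; auto.
Qed.

Lemma n_nearly_finitary_of_contract_coloops n :
  n_nearly_finitary n (contract M T) -> n_nearly_finitary n M.
Proof.
  intros Hn F B HF HB HBF.
  apply card_le_subset with (Y := fun x => (F x /\ ~ T x) /\ ~ (B x /\ ~ T x)).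
  - intros x [HFx HnB].
    assert (HnT : ~ T x) by (intros Ht; exact (HnB (coloops_sub_base HB Ht))).
    tauto.
  - apply Hn.
    + exact (base_setD finitarization_contract_coloops_indep
               (@finitarization_indep_subset E M)
               (@indep_finitarization_setU_coloops) HF).
    + exact (base_setD contract_coloops_indep (matroid_indep_subset HM)
               (@indep_setU_coloops) HB).
    + intros x [Hx Ht]; auto.
Qed.

End Coloops.

Theorem theorem3p4p8 (E : Type) (M : setsys E) (T : E -> Prop) :
  is_matroid M ->
  nearly_finitary M ->
  (forall n : nat, ~ n_nearly_finitary n M) ->
  (forall t, T t -> is_coloop M t) ->
  is_matroid (contract M T) /\
  nearly_finitary (contract M T) /\
  (forall n : nat, ~ n_nearly_finitary n (contract M T)).
Proof.
  intros HM Hnf Hnn HT. split; [|split].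
  - exact (is_matroid_contract_coloops HM HT).
  - exact (nearly_finitary_contract_coloops HM HT Hnf).
  - intros n Hn. exact (Hnn n (n_nearly_finitary_of_contract_coloops HM HT Hn)).
Qed.
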